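(* Suppose choices follow the Luce choice model with true parameter $\theta^\star\in\Theta_b$, all (fixed) comparison sets $S_1,\dots,S_m$ have cardinality $k\ge2$, and $\lambda_2(L_M)>0$. Let $\widehat\theta\in\arg\max_{\theta\in\Theta_b}\ell(\theta)$. Then with probability at least $1-2/n$, $$\mathrm{MSE}(\widehat\theta,\theta^\star)\le D^2\,\frac{n(\log n+2)}{\lambda_2(L_M)^2}\,\frac1m,\qquad D=4k^2e^{4b}.$$
   Context: Items $N=\{1,\dots,n\}$; observations $(S_t,y_t)$, $t=1,\dots,m$, $y_t\in S_t\subseteq N$. Luce choice model: given the comparison sets, the choices are independent with $\Pr[y_t=i]=p_{i,S_t}(\theta^\star)$, where $p_{i,S}(\theta)=e^{\theta_i}/\sum_{v\in S}e^{\theta_v}$. Log-likelihood $\ell(\theta)=\sum_{t=1}^m\log p_{y_t,S_t}(\theta)$. $\Theta_b=\{\theta\in[-b,b]^n:\sum_i\theta_i=0\}$, $\mathrm{MSE}(\widehat\theta,\theta^\star)=\frac1n\|\widehat\theta-\theta^\star\|_2^2$. $M\in\mathbb R^{n\times n}$ has zero diagonal and off-diagonal entries $\frac nm\cdot\#\{t:\{i,j\}\subseteq S_t\}$. Laplacian $L_A=\mathrm{diag}(A\mathbf 1)-A$; $\lambda_2$ is the second smallest eigenvalue. *)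

From Stdlib Require Import Reals Lra List Arith ClassicalDescription.
Import ListNotations.
Open Scope R_scope.

(* Items are 0,...,n-1; observation times are 0,...,m-1. *)

Definition rsum (n : nat) (f : nat -> R) : R :=
  fold_right Rplus 0 (map f (seq 0 n)).

Definition lsum (s : list nat) (f : nat -> R) : R :=
  fold_right Rplus 0 (map f s).

Definition rprod (n : nat) (f : nat -> R) : R :=
  fold_right Rmult 1 (map f (seq 0 n)).

Definition luce_p (theta : nat -> R) (i : nat) (S : list nat) : R :=
  exp (theta i) / lsum S (fun v => exp (theta v)).

Definition in_Theta (n : nat) (b : R) (theta : nat -> R) : Prop :=
  (forall i, (i < n)%nat -> - b <= theta i <= b) /\ rsum n theta = 0.

(* An outcome is a list ys of length m with y_t = nth t ys 0. *)
Definition obs (ys : list nat) (t : nat) : nat := nth t ys 0%nat.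

Fixpoint outcomes (S : nat -> list nat) (m : nat) : list (list nat) :=
  match m with
  | O => [ [] ]
  | Datatypes.S t =>
      flat_map (fun ys => map (fun i => ys ++ [i]) (S t)) (outcomes S t)
  end.

Definition loglik (S : nat -> list nat) (m : nat) (ys : list nat)
  (theta : nat -> R) : R :=
  rsum m (fun t => ln (luce_p theta (obs ys t) (S t))).

Definition outcome_prob (S : nat -> list nat) (m : nat) (theta : nat -> R)
  (ys : list nat) : R :=
  rprod m (fun t => luce_p theta (obs ys t) (S t)).

Definition ind (P : Prop) : R :=
  if excluded_middle_informative P then 1 else 0.

Definition Prob (S : nat -> list nat) (m : nat) (theta : nat -> R)
  (E : list nat -> Prop) : R :=
  fold_right Rplus 0
    (map (fun ys => outcome_prob S m theta ys * ind (E ys)) (outcomes S m)).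

Definition MSE (n : nat) (a b : nat -> R) : R :=
  / INR n * rsum n (fun i => (a i - b i) ^ 2).

Definition cooc (S : nat -> list nat) (m i j : nat) : R :=
  rsum m (fun t =>
    if (existsb (Nat.eqb i) (S t) && existsb (Nat.eqb j) (S t))%bool
    then 1 else 0).

Definition Mmat (S : nat -> list nat) (n m : nat) (i j : nat) : R :=
  if Nat.eqb i j then 0 else INR n / INR m * cooc S m i j.

Definition laplacian (n : nat) (A : nat -> nat -> R) (i j : nat) : R :=
  (if Nat.eqb i j then rsum n (fun l => A i l) else 0) - A i j.

(* is_lambda2 n A l : l is the second smallest eigenvalue (with
   multiplicity) of the symmetric n x n matrix A, i.e. A has an orthonormal
   eigenbasis V_0,...,V_{n-1} with eigenvalues mu_0 <= ... <= mu_{n-1}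
   (spectral decomposition, which exists and whose sorted eigenvalue list is
   unique) and l = mu_1. *)
Definition is_lambda2 (n : nat) (A : nat -> nat -> R) (l : R) : Prop :=
  (2 <= n)%nat /\
  exists (mu : nat -> R) (V : nat -> nat -> R),
    (forall p q, (p < n)%nat -> (q < n)%nat ->
        rsum n (fun r => V p r * V q r) = if Nat.eqb p q then 1 else 0) /\
    (forall p r, (p < n)%nat -> (r < n)%nat ->
        rsum n (fun c => A r c * V p c) = mu p * V p r) /\
    (forall p q, (p <= q)%nat -> (q < n)%nat -> mu p <= mu q) /\
    l = mu 1%nat.

(* The log-likelihood of the Luce model is strongly concave on Theta_b: a
   second-order expansion of log-sum-exp shows that observation t contributes
   curvature at least exp(-4b)/k^2 * 1/2 sum_{i,j in S_t} (D_i - D_j)^2, and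
   these contributions add up to (m/n) D^T L_M D >= (m/n) lambda_2 |D|^2 for
   every D of zero sum.  As thetahat maximizes the likelihood, comparing with
   the expansion at theta* gives A |D|^2 <= <G, D> for D = thetahat - theta*,
   where A = exp(-4b) m lambda_2 / (2 k^2 n) and G is the score at theta*;
   hence |D| <= |G| / A.  The score is a sum of m independent centred vectors:
   peeling off one observation at a time with Hoeffding's lemma bounds
   E exp(|G|^2 / (4m)) by exp(2/3), and Chernoff's bound then gives
   |G|^2 <= 4m (ln n + 2) outside an event of probability at most 1/n. *)

From Pilot Require Import Defs.
From Stdlib Require Import Reals Lra Lia List Bool ClassicalDescription.
From Coquelicot Require Import Coquelicot.
From mathcomp Require all_boot all_algebra Rstruct.
Import ListNotations.
Open Scope R_scope.

(** * Finite sums *)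

Definition sum_over {A} (l : list A) (f : A -> R) : R := fold_right Rplus 0 (map f l).

Section SumOver.
Context {A : Type}.
Implicit Types (l : list A) (f g : A -> R).

Lemma sum_over_cons a l f : sum_over (a :: l) f = f a + sum_over l f.
Proof. reflexivity. Qed.

Lemma sum_over_app l1 l2 f : sum_over (l1 ++ l2) f = sum_over l1 f + sum_over l2 f.
Proof.
  induction l1 as [|a l1 IH]; [unfold sum_over; simpl; ring|].
  rewrite <- app_comm_cons, !sum_over_cons, IH. ring.
Qed.

Lemma sum_over_ext l f g : (forall x, In x l -> f x = g x) -> sum_over l f = sum_over l g.
Proof.
  induction l as [|a l IH]; intros H; [reflexivity|].
  rewrite !sum_over_cons, H by (simpl; auto).
  rewrite IH; [reflexivity|]. intros x Hx. apply H. simpl; auto.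
Qed.

Lemma sum_over_le l f g : (forall x, In x l -> f x <= g x) -> sum_over l f <= sum_over l g.
Proof.
  induction l as [|a l IH]; intros H; [unfold sum_over; simpl; lra|].
  rewrite !sum_over_cons. apply Rplus_le_compat; [apply H; simpl; auto|].
  apply IH. intros x Hx. apply H. simpl; auto.
Qed.

Lemma sum_over_plus l f g : sum_over l (fun x => f x + g x) = sum_over l f + sum_over l g.
Proof. induction l as [|a l IH]; [unfold sum_over; simpl; ring|]. rewrite !sum_over_cons, IH. ring. Qed.

Lemma sum_over_minus l f g : sum_over l (fun x => f x - g x) = sum_over l f - sum_over l g.
Proof. induction l as [|a l IH]; [unfold sum_over; simpl; ring|]. rewrite !sum_over_cons, IH. ring. Qed.

Lemma sum_over_scal_l l c f : sum_over l (fun x => c * f x) = c * sum_over l f.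
Proof. induction l as [|a l IH]; [unfold sum_over; simpl; ring|]. rewrite !sum_over_cons, IH. ring. Qed.

Lemma sum_over_scal_r l c f : sum_over l (fun x => f x * c) = sum_over l f * c.
Proof. induction l as [|a l IH]; [unfold sum_over; simpl; ring|]. rewrite !sum_over_cons, IH. ring. Qed.

Lemma sum_over_const l c : sum_over l (fun _ => c) = INR (length l) * c.
Proof.
  induction l as [|a l IH]; [unfold sum_over; simpl; ring|].
  rewrite sum_over_cons, IH. cbn [length]. rewrite S_INR. ring.
Qed.

Lemma sum_over_nonneg l f : (forall x, In x l -> 0 <= f x) -> 0 <= sum_over l f.
Proof.
  intros H. replace 0 with (sum_over l (fun _ => 0)) by (rewrite sum_over_const; ring).
  now apply sum_over_le.
Qed.

Lemma sum_over_pos l f : l <> [] -> (forall x, In x l -> 0 < f x) -> 0 < sum_over l f.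
Proof.
  destruct l as [|a l]; intros Hne H; [congruence|].
  rewrite sum_over_cons.
  assert (0 <= sum_over l f) by (apply sum_over_nonneg; intros; left; apply H; simpl; auto).
  specialize (H a (or_introl eq_refl)). lra.
Qed.

Lemma sum_over_elem_le l f y :
  (forall x, In x l -> 0 <= f x) -> In y l -> f y <= sum_over l f.
Proof.
  induction l as [|a l IH]; intros H Hy; [destruct Hy|].
  rewrite sum_over_cons. destruct Hy as [<-|Hy].
  - assert (0 <= sum_over l f) by (apply sum_over_nonneg; intros; apply H; simpl; auto). lra.
  - assert (0 <= f a) by (apply H; simpl; auto).
    assert (f y <= sum_over l f) by (apply IH; simpl in *; auto). lra.
Qed.

End SumOver.

Lemma sum_over_swap {A B} (l : list A) (l' : list B) (f : A -> B -> R) :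
  sum_over l (fun x => sum_over l' (fun y => f x y))
  = sum_over l' (fun y => sum_over l (fun x => f x y)).
Proof.
  induction l as [|a l IH].
  - rewrite (sum_over_ext l' _ (fun _ => 0)) by reflexivity.
    rewrite sum_over_const. unfold sum_over; simpl; ring.
  - rewrite sum_over_cons, IH, <- sum_over_plus. reflexivity.
Qed.

Lemma sum_over_flat_map {A B} (l : list A) (h : A -> list B) (f : B -> R) :
  sum_over (flat_map h l) f = sum_over l (fun x => sum_over (h x) f).
Proof. induction l as [|a l IH]; [reflexivity|]. cbn [flat_map]. rewrite sum_over_app, IH. reflexivity. Qed.

Lemma sum_over_map {A B} (l : list A) (h : A -> B) (f : B -> R) :
  sum_over (map h l) f = sum_over l (fun x => f (h x)).
Proof. induction l as [|a l IH]; [reflexivity|]. cbn [map]. rewrite !sum_over_cons, IH. reflexivity. Qed.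

Lemma lsum_sum_over l f : lsum l f = sum_over l f.
Proof. reflexivity. Qed.

Section RangeSums.
Implicit Types (n : nat) (f g : nat -> R).

Lemma rsum_sum_over n f : rsum n f = sum_over (seq 0 n) f.
Proof. reflexivity. Qed.

Lemma rsum_ext n f g : (forall i, (i < n)%nat -> f i = g i) -> rsum n f = rsum n g.
Proof. intros H. apply sum_over_ext. intros i Hi%in_seq. apply H. lia. Qed.

Lemma rsum_le n f g : (forall i, (i < n)%nat -> f i <= g i) -> rsum n f <= rsum n g.
Proof. intros H. apply sum_over_le. intros i Hi%in_seq. apply H. lia. Qed.

Lemma rsum_nonneg n f : (forall i, (i < n)%nat -> 0 <= f i) -> 0 <= rsum n f.
Proof. intros H. apply sum_over_nonneg. intros i Hi%in_seq. apply H. lia. Qed.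

Lemma rsum_plus n f g : rsum n (fun i => f i + g i) = rsum n f + rsum n g.
Proof. apply sum_over_plus. Qed.

Lemma rsum_minus n f g : rsum n (fun i => f i - g i) = rsum n f - rsum n g.
Proof. apply sum_over_minus. Qed.

Lemma rsum_scal_l n c f : rsum n (fun i => c * f i) = c * rsum n f.
Proof. apply sum_over_scal_l. Qed.

Lemma rsum_scal_r n c f : rsum n (fun i => f i * c) = rsum n f * c.
Proof. apply sum_over_scal_r. Qed.

Lemma rsum_const n c : rsum n (fun _ => c) = INR n * c.
Proof. unfold rsum. rewrite <- (length_seq n 0) at 2. apply sum_over_const. Qed.

Lemma rsum_swap n m (f : nat -> nat -> R) :
  rsum n (fun i => rsum m (fun j => f i j)) = rsum m (fun j => rsum n (fun i => f i j)).
Proof. apply sum_over_swap. Qed.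

Lemma rsum_S n f : rsum (S n) f = rsum n f + f n.
Proof.
  rewrite !rsum_sum_over, seq_S, sum_over_app, sum_over_cons.
  change (sum_over [] f) with 0. rewrite Nat.add_0_l. ring.
Qed.

Lemma rsum_delta n y f : (y < n)%nat ->
  rsum n (fun i => if Nat.eqb i y then f i else 0) = f y.
Proof.
  induction n as [|n IH]; intros Hy; [lia|].
  rewrite rsum_S. destruct (Nat.eqb_spec n y) as [<-|Hne].
  - rewrite (rsum_ext _ _ (fun _ => 0)), rsum_const; [ring|].
    intros i Hi. destruct (Nat.eqb_spec i n); [lia|auto].
  - rewrite IH by lia. ring.
Qed.

End RangeSums.

Definition inS (l : list nat) (i : nat) : bool := existsb (Nat.eqb i) l.

Lemma inS_spec l i : inS l i = true <-> In i l.
Proof.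
  unfold inS. rewrite existsb_exists. split.
  - intros [x [Hx E%Nat.eqb_eq]]. now subst.
  - intros H. exists i. split; auto. apply Nat.eqb_refl.
Qed.

Lemma rsum_inS n l f : NoDup l -> (forall i, In i l -> (i < n)%nat) ->
  rsum n (fun i => if inS l i then f i else 0) = sum_over l f.
Proof.
  induction l as [|a l IH]; intros Hnd Hin.
  - rewrite (rsum_ext _ _ (fun _ => 0)) by reflexivity.
    rewrite rsum_const. unfold sum_over; simpl; ring.
  - inversion Hnd as [|? ? Hna Hnd']; subst.
    rewrite sum_over_cons, <- IH by (auto; intros; apply Hin; right; auto).
    rewrite <- (rsum_delta n a f) by (apply Hin; left; auto).
    rewrite <- rsum_plus. apply rsum_ext. intros i _.
    unfold inS. simpl. fold (inS l i).
    destruct (Nat.eqb_spec i a) as [->|Hne]; simpl; [|ring].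
    destruct (inS l a) eqn:E; [apply inS_spec in E; contradiction | ring].
Qed.

Definition sqnorm (n : nat) (v : nat -> R) : R := rsum n (fun i => v i ^ 2).

Definition inner (n : nat) (u v : nat -> R) : R := rsum n (fun i => u i * v i).

Definition quad (n : nat) (L : nat -> nat -> R) (x : nat -> R) : R :=
  rsum n (fun r => x r * rsum n (fun c => L r c * x c)).

Lemma sqnorm_nonneg n v : 0 <= sqnorm n v.
Proof. apply rsum_nonneg. intros; apply pow2_ge_0. Qed.

(** * Taylor bounds and Hoeffding's lemma *)

Lemma exp_le_compat x y : x <= y -> exp x <= exp y.
Proof. intros [H|H]; [left; now apply exp_increasing | right; now subst]. Qed.

Lemma derive_nonneg_le (f df : R -> R) (u : R) :
  (forall x, is_derive f x (df x)) -> 0 <= u ->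
  (forall x, 0 <= x <= u -> 0 <= df x) -> f 0 <= f u.
Proof.
  intros Hd Hu Hpos.
  destruct (MVT_gen f 0 u df) as [c [Hc Heq]].
  - intros x _. apply Hd.
  - intros x _. apply continuity_pt_filterlim, (ex_derive_continuous f x).
    exists (df x). apply Hd.
  - rewrite Rmin_left, Rmax_right in Hc by lra.
    assert (0 <= df c * (u - 0)) by (apply Rmult_le_pos; [apply Hpos|]; lra).
    lra.
Qed.

Lemma taylor2_upper (h h1 h2 : R -> R) (K u : R) :
  (forall x, is_derive h x (h1 x)) -> (forall x, is_derive h1 x (h2 x)) ->
  h 0 = 0 -> h1 0 = 0 -> 0 <= u -> (forall x, 0 <= x <= u -> h2 x <= K) ->
  h u <= K * u ^ 2 / 2.
Proof.
  intros D1 D2 H0 H10 Hu Hb.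
  assert (H1le : forall x, 0 <= x <= u -> h1 x <= K * x).
  { intros x Hx.
    enough (K * 0 - h1 0 <= K * x - h1 x) by lra.
    apply (derive_nonneg_le (fun y => K * y - h1 y) (fun y => K - h2 y)); [| lra |].
    - intros y. apply (is_derive_minus (fun y => K * y) h1); [|apply D2].
      auto_derive; [auto | ring].
    - intros y Hy. specialize (Hb y ltac:(lra)). lra. }
  enough (K * 0 ^ 2 / 2 - h 0 <= K * u ^ 2 / 2 - h u) by (simpl in *; lra).
  apply (derive_nonneg_le (fun y => K * y ^ 2 / 2 - h y) (fun y => K * y - h1 y)); [| lra |].
  - intros y. apply (is_derive_minus (fun y => K * y ^ 2 / 2) h); [|apply D1].
    auto_derive; [auto | simpl; field].
  - intros y Hy. specialize (H1le y Hy). lra.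
Qed.

Lemma taylor2_lower (h h1 h2 : R -> R) (K u : R) :
  (forall x, is_derive h x (h1 x)) -> (forall x, is_derive h1 x (h2 x)) ->
  h 0 = 0 -> h1 0 = 0 -> 0 <= u -> (forall x, 0 <= x <= u -> K <= h2 x) ->
  K * u ^ 2 / 2 <= h u.
Proof.
  intros D1 D2 H0 H10 Hu Hb.
  enough (- h u <= - K * u ^ 2 / 2) by lra.
  apply (taylor2_upper (fun x => - h x) (fun x => - h1 x) (fun x => - h2 x)); auto.
  - intros x. now apply (is_derive_opp h).
  - intros x. now apply (is_derive_opp h1).
  - rewrite H0; ring.
  - rewrite H10; ring.
  - intros x Hx. specialize (Hb x Hx). lra.
Qed.

Lemma exp_convex_chord A B z s : A < B -> A <= z <= B ->
  exp (s * z) <= ((B - z) * exp (s * A) + (z - A) * exp (s * B)) / (B - A).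
Proof.
  intros HAB Hz.
  assert (tangent : forall x w, exp w * (1 + (x - w)) <= exp x).
  { intros x w. replace x with (w + (x - w)) at 2 by ring. rewrite exp_plus.
    apply Rmult_le_compat_l; [left; apply exp_pos | apply exp_ineq1_le]. }
  apply Rmult_le_reg_r with (B - A); [lra|].
  unfold Rdiv. rewrite Rmult_assoc, Rinv_l, Rmult_1_r by lra.
  pose proof (tangent (s * A) (s * z)) as TA. pose proof (tangent (s * B) (s * z)) as TB.
  apply Rmult_le_compat_l with (r := B - z) in TA; [|lra].
  apply Rmult_le_compat_l with (r := z - A) in TB; [|lra].
  lra.
Qed.

(* [h x = - q x + ln (1 - q + q e^x)], the centred log-moment generating
   function of a Bernoulli(q) variable, has [h 0 = h' 0 = 0] and [h'' <= 1/4]. *)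
Lemma hoeffding_two_point (q u : R) : 0 <= q <= 1 -> 0 <= u ->
  exp (- q * u) * (1 - q + q * exp u) <= exp (u ^ 2 / 8).
Proof.
  intros Hq Hu.
  assert (Dpos : forall x, 0 < 1 - q + q * exp x).
  { intros x. pose proof (exp_pos x).
    assert (0 <= q * exp x) by (apply Rmult_le_pos; lra).
    destruct (Rle_lt_dec q (1/2)); [lra|].
    assert (0 < q * exp x) by (apply Rmult_lt_0_compat; lra). lra. }
  set (h := fun x => - q * x + ln (1 - q + q * exp x)).
  assert (Hh : h u <= 1/4 * u ^ 2 / 2).
  { apply (taylor2_upper h (fun x => - q + q * exp x / (1 - q + q * exp x))
                         (fun x => q * exp x * (1 - q) / (1 - q + q * exp x) ^ 2));
      auto.
    - intros x. unfold h. specialize (Dpos x). auto_derive; [lra | field; lra].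
    - intros x. specialize (Dpos x). auto_derive; [lra | field; lra].
    - unfold h. rewrite exp_0, Rmult_1_r, Rplus_comm.
      replace (1 - q + q) with 1 by ring. rewrite ln_1. ring.
    - rewrite exp_0. field. lra.
    - intros x _. specialize (Dpos x). pose proof (exp_pos x).
      apply Rmult_le_reg_r with ((1 - q + q * exp x) ^ 2); [apply pow_lt; lra|].
      unfold Rdiv. rewrite Rmult_assoc, Rinv_l, Rmult_1_r by (apply pow_nonzero; lra).
      pose proof (pow2_ge_0 (q * exp x - (1 - q))). nra. }
  replace (exp (- q * u) * (1 - q + q * exp u)) with (exp (h u))
    by (unfold h; rewrite exp_plus, exp_ln by apply Dpos; reflexivity).
  apply exp_le_compat. lra.
Qed.

(* Below the chord of [exp] over [[A, B]], [Z] may be replaced by a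
   two-point variable with values [A] and [B] and the same mean. *)
Lemma hoeffding_lemma {T} (l : list T) (p Z : T -> R) (A B s : R) :
  (forall y, In y l -> 0 <= p y) -> sum_over l p = 1 ->
  sum_over l (fun y => p y * Z y) = 0 ->
  (forall y, In y l -> A <= Z y <= B) -> 0 <= s ->
  sum_over l (fun y => p y * exp (s * Z y)) <= exp (s ^ 2 * (B - A) ^ 2 / 8).
Proof.
  intros Hp H1 H0 HZ Hs.
  assert (mean_between : A <= 0 <= B).
  { assert (LA : sum_over l (fun y => p y * A) <= sum_over l (fun y => p y * Z y)).
    { apply sum_over_le. intros y Hy. apply Rmult_le_compat_l; [auto | apply HZ; auto]. }
    assert (LB : sum_over l (fun y => p y * Z y) <= sum_over l (fun y => p y * B)).
    { apply sum_over_le. intros y Hy. apply Rmult_le_compat_l; [auto | apply HZ; auto]. }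
    rewrite !sum_over_scal_r, H1, H0 in *. lra. }
  destruct (Req_dec A B) as [<-|NE].
  { rewrite (sum_over_ext _ _ p), H1.
    - replace (s ^ 2 * (A - A) ^ 2 / 8) with 0 by field. rewrite exp_0. lra.
    - intros y Hy. specialize (HZ y Hy). replace (Z y) with 0 by lra.
      rewrite Rmult_0_r, exp_0. ring. }
  set (q := - A / (B - A)). set (u := s * (B - A)).
  assert (Hq : 0 <= q <= 1).
  { unfold q. split.
    - apply Rmult_le_pos; [lra | left; apply Rinv_0_lt_compat; lra].
    - apply Rmult_le_reg_r with (B - A); [lra|].
      unfold Rdiv. rewrite Rmult_assoc, Rinv_l by lra. lra. }
  apply Rle_trans with
    (sum_over l (fun y => p y * (((B - Z y) * exp (s * A) + (Z y - A) * exp (s * B)) / (B - A)))).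
  { apply sum_over_le. intros y Hy.
    apply Rmult_le_compat_l; [auto | apply exp_convex_chord; auto; lra]. }
  rewrite (sum_over_ext _ _
     (fun y => p y * ((B * exp (s * A) - A * exp (s * B)) / (B - A))
             + p y * Z y * ((exp (s * B) - exp (s * A)) / (B - A))))
    by (intros; field; lra).
  rewrite sum_over_plus, !sum_over_scal_r, H1, H0.
  replace (s ^ 2 * (B - A) ^ 2 / 8) with (u ^ 2 / 8) by (unfold u; field).
  replace (1 * ((B * exp (s * A) - A * exp (s * B)) / (B - A)) + 0 * ((exp (s * B) - exp (s * A)) / (B - A)))
    with (exp (- q * u) * (1 - q + q * exp u)).
  - apply hoeffding_two_point; [auto | unfold u; apply Rmult_le_pos; lra].
  - unfold q, u.
    replace (- (- A / (B - A)) * (s * (B - A))) with (s * A) by (field; lra).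
    replace (s * B) with (s * A + s * (B - A)) by ring. rewrite exp_plus.
    field. lra.
Qed.

(** * Strong convexity of log-sum-exp *)

Lemma is_derive_Rminus (f g : R -> R) x df dg :
  is_derive f x df -> is_derive g x dg -> is_derive (fun y => f y - g y) x (df - dg).
Proof. exact (is_derive_minus f g x df dg). Qed.

Lemma is_derive_ln_comp (f : R -> R) x df :
  is_derive f x df -> 0 < f x -> is_derive (fun y => ln (f y)) x (df / f x).
Proof. intros Hf Hpos. exact (is_derive_comp ln f x (/ f x) df (is_derive_ln _ Hpos) Hf). Qed.

Lemma is_derive_sum_over {T} (l : list T) (F F' : T -> R -> R) x :
  (forall v, In v l -> is_derive (F v) x (F' v x)) ->
  is_derive (fun y => sum_over l (fun v => F v y)) x (sum_over l (fun v => F' v x)).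
Proof.
  induction l as [|a l IH]; intros H.
  - apply (is_derive_ext (fun _ => 0)); [reflexivity | auto_derive; auto].
  - apply (is_derive_plus (F a) (fun y => sum_over l (fun v => F v y))).
    + apply H. left; auto.
    + apply IH. intros; apply H; right; auto.
Qed.

Lemma sum_pairs_weighted_sqdiff {T} (l : list T) (e D : T -> R) :
  sum_over l (fun i => sum_over l (fun j => e i * e j * (D i - D j) ^ 2)) =
  2 * (sum_over l (fun i => e i * D i ^ 2) * sum_over l e - sum_over l (fun i => e i * D i) ^ 2).
Proof.
  rewrite (sum_over_ext _ _ (fun i => e i * D i ^ 2 * sum_over l e
            + e i * sum_over l (fun j => e j * D j ^ 2)
            - 2 * (e i * D i * sum_over l (fun j => e j * D j)))).
  - rewrite sum_over_minus, sum_over_plus, sum_over_scal_l, !sum_over_scal_r. ring.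
  - intros i _.
    rewrite (sum_over_ext _ _ (fun j => e i * D i ^ 2 * e j + e i * (e j * D j ^ 2)
                                        - 2 * (e i * D i * (e j * D j)))) by (intros; ring).
    rewrite sum_over_minus, sum_over_plus, !sum_over_scal_l. ring.
Qed.

Definition pairwise_sqdiff (l : list nat) (D : nat -> R) : R :=
  / 2 * sum_over l (fun i => sum_over l (fun j => (D i - D j) ^ 2)).

Section LogSumExp.
Variables (l : list nat) (th D : nat -> R) (b : R).
Hypothesis l_nonempty : l <> [].
Hypothesis box : forall v, In v l -> - b <= th v <= b /\ - b <= th v + D v <= b.

Let wsum (s : R) (f : nat -> R) : R := sum_over l (fun v => f v * exp (th v + s * D v)).

Let Z s := wsum s (fun _ => 1).
Let Z1 s := wsum s D.
Let Z2 s := wsum s (fun v => D v * D v).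

Let Z_pos s : 0 < Z s.
Proof.
  apply sum_over_pos; auto. intros v _. rewrite Rmult_1_l. apply exp_pos.
Qed.

Let is_derive_wsum f s : is_derive (fun s => wsum s f) s (wsum s (fun v => f v * D v)).
Proof.
  apply (is_derive_sum_over l (fun v s => f v * exp (th v + s * D v))
                              (fun v s => f v * D v * exp (th v + s * D v))).
  intros v _. auto_derive; [auto | ring].
Qed.

(* Along the segment from [th] to [th + D] every weight [exp (th v + s D v)]
   lies in [[exp (-b), exp b]], so each softmax product [p_i p_j] is at least
   [exp (-4b) / |l|^2]. *)
Let softmax_pair_lower_bound s i j : 0 <= s <= 1 -> In i l -> In j l ->
  exp (- (4 * b)) / INR (length l) ^ 2
  <= exp (th i + s * D i) * exp (th j + s * D j) / Z s ^ 2.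
Proof.
  intros Hs Hi Hj.
  assert (Hlen : 0 < INR (length l)) by (destruct l; [congruence | apply lt_0_INR; simpl; lia]).
  assert (low : forall v, In v l -> exp (- b) <= exp (th v + s * D v)).
  { intros v Hv. destruct (box v Hv). apply exp_le_compat. nra. }
  assert (up : Z s <= INR (length l) * exp b).
  { rewrite <- sum_over_const. apply sum_over_le. intros v Hv. destruct (box v Hv).
    rewrite Rmult_1_l. apply exp_le_compat. nra. }
  pose proof (Z_pos s).
  apply Rmult_le_reg_r with (Z s ^ 2); [apply pow_lt; lra|].
  replace (exp (th i + s * D i) * exp (th j + s * D j) / Z s ^ 2 * Z s ^ 2)
    with (exp (th i + s * D i) * exp (th j + s * D j)) by (field; lra).
  apply Rle_trans with (exp (- (4 * b)) / INR (length l) ^ 2 * (INR (length l) * exp b) ^ 2).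
  - apply Rmult_le_compat_l.
    + apply Rmult_le_pos; [left; apply exp_pos | left; apply Rinv_0_lt_compat, pow_lt; auto].
    + apply pow_incr. lra.
  - replace (exp (- (4 * b)) / INR (length l) ^ 2 * (INR (length l) * exp b) ^ 2)
      with (exp (- b) * exp (- b)).
    + apply Rmult_le_compat; auto; left; apply exp_pos.
    + assert (inv : exp b * exp (- b) = 1) by (rewrite <- exp_plus, Rplus_opp_r; apply exp_0).
      replace (- (4 * b)) with (- b + - b + - b + - b) by ring. rewrite !exp_plus.
      replace (exp (- b) * exp (- b) * exp (- b) * exp (- b) / INR (length l) ^ 2
               * (INR (length l) * exp b) ^ 2)
        with (exp (- b) * exp (- b) * (exp b * exp (- b)) ^ 2) by (field; lra).
      rewrite inv. ring.
Qed.

Let is_derive_Z s : is_derive Z s (Z1 s).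
Proof.
  replace (Z1 s) with (wsum s (fun v => 1 * D v)) by (apply sum_over_ext; intros; ring).
  apply is_derive_wsum.
Qed.

(* [(Z2 Z - Z1^2) / Z^2] is the variance of [D] under the softmax weights
   [exp (th v + s D v) / Z s], a weighted sum of the pairwise [(D i - D j)^2]. *)
Let softmax_variance_lower_bound s : 0 <= s <= 1 ->
  exp (- (4 * b)) / INR (length l) ^ 2 * pairwise_sqdiff l D
  <= (Z2 s * Z s - Z1 s * Z1 s) / Z s ^ 2.
Proof.
  intros Hs. assert (0 < Z s) by apply Z_pos.
  set (e := fun v => exp (th v + s * D v)).
  replace ((Z2 s * Z s - Z1 s * Z1 s) / Z s ^ 2)
    with (/ 2 * sum_over l (fun i => sum_over l (fun j => e i * e j / Z s ^ 2 * (D i - D j) ^ 2))).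
  - unfold pairwise_sqdiff.
    rewrite <- Rmult_assoc, (Rmult_comm (_ / _)), Rmult_assoc, <- sum_over_scal_l.
    apply Rmult_le_compat_l; [lra|].
    apply sum_over_le. intros i Hi. rewrite <- sum_over_scal_l.
    apply sum_over_le. intros j Hj.
    apply Rmult_le_compat_r; [apply pow2_ge_0 | apply softmax_pair_lower_bound; auto].
  - assert (E0 : Z s = sum_over l e) by (apply sum_over_ext; intros; unfold e; ring).
    assert (E1 : Z1 s = sum_over l (fun i => e i * D i))
      by (apply sum_over_ext; intros; unfold e; ring).
    assert (E2 : Z2 s = sum_over l (fun i => e i * D i ^ 2))
      by (apply sum_over_ext; intros; unfold e; ring).
    rewrite (sum_over_ext _ _ (fun i => / Z s ^ 2 * sum_over l (fun j => e i * e j * (D i - D j) ^ 2)))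
      by (intros; rewrite <- sum_over_scal_l; apply sum_over_ext; intros; unfold Rdiv; ring).
    rewrite sum_over_scal_l, sum_pairs_weighted_sqdiff, <- E0, <- E1, <- E2.
    field. lra.
Qed.

(* Second-order Taylor expansion of [s |-> ln (Z s)] on [[0, 1]]. *)
Lemma log_sum_exp_strong_convexity :
  ln (lsum l (fun v => exp (th v)))
  + sum_over l (fun v => exp (th v) * D v) / lsum l (fun v => exp (th v))
  + exp (- (4 * b)) / INR (length l) ^ 2 * pairwise_sqdiff l D / 2
  <= ln (lsum l (fun v => exp (th v + D v))).
Proof.
  set (c0 := Z1 0 / Z 0).
  assert (Taylor : exp (- (4 * b)) / INR (length l) ^ 2 * pairwise_sqdiff l D * 1 ^ 2 / 2
                   <= ln (Z 1) - ln (Z 0) - 1 * c0).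
  { apply (taylor2_lower (fun s => ln (Z s) - ln (Z 0) - s * c0) (fun s => Z1 s / Z s - c0)
                         (fun s => (Z2 s * Z s - Z1 s * Z1 s) / Z s ^ 2));
      [| | ring | unfold c0; ring | lra | apply softmax_variance_lower_bound].
    - intros x. assert (0 < Z x) by apply Z_pos.
      replace (Z1 x / Z x - c0) with (Z1 x / Z x - 0 - c0) by ring.
      apply is_derive_Rminus; [apply is_derive_Rminus|].
      + apply is_derive_ln_comp; [apply is_derive_Z | auto].
      + auto_derive; auto.
      + auto_derive; [auto | ring].
    - intros x. assert (0 < Z x) by apply Z_pos.
      replace ((Z2 x * Z x - Z1 x * Z1 x) / Z x ^ 2)
        with ((Z2 x * Z x - Z1 x * Z1 x) / Z x ^ 2 - 0) by ring.
      apply is_derive_Rminus; [|auto_derive; auto].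
      apply is_derive_div; [apply is_derive_wsum | apply is_derive_Z | lra]. }
  assert (E1 : Z 1 = lsum l (fun v => exp (th v + D v)))
    by (apply sum_over_ext; intros; rewrite !Rmult_1_l; reflexivity).
  assert (E0 : Z 0 = lsum l (fun v => exp (th v)))
    by (apply sum_over_ext; intros; rewrite Rmult_0_l, Rplus_0_r; ring).
  assert (E0' : Z1 0 = sum_over l (fun v => exp (th v) * D v))
    by (apply sum_over_ext; intros; rewrite Rmult_0_l, Rplus_0_r; ring).
  unfold c0 in Taylor. rewrite E1, E0, E0', pow1, Rmult_1_r, Rmult_1_l in Taylor. lra.
Qed.

End LogSumExp.

(** * Quadratic forms above the second eigenvalue *)

Module OrthonormalSquare.
Import all_boot all_algebra Rstruct GRing.Theory.

Lemma rsum_bigsum n (f : nat -> R) : rsum n f = (\sum_(i < n) f i)%R.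
Proof.
  elim: n => [|n IH]; first by rewrite big_ord0.
  by rewrite rsum_S big_ord_recr /= IH.
Qed.

(* For a square matrix, [A A^T = 1] implies [A^T A = 1]. *)
Lemma orthonormal_cols (n : nat) (V : nat -> nat -> R) :
  (forall p q, (p < n)%coq_nat -> (q < n)%coq_nat ->
     inner n (V p) (V q) = if Nat.eqb p q then 1 else 0) ->
  forall r c, (r < n)%coq_nat -> (c < n)%coq_nat ->
     rsum n (fun p => V p r * V p c) = if Nat.eqb r c then 1 else 0.
Proof.
  move=> orth r c Hr Hc.
  pose A := (\matrix_(i < n, j < n) V i j)%R.
  have AAT : (A *m A^T = 1%:M)%R.
    apply/matrixP => i j; rewrite !mxE.
    rewrite (eq_bigr (fun l : 'I_n => V i l * V j l)); last by move=> l _; rewrite !mxE.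
    rewrite -(rsum_bigsum n (fun l => V i l * V j l)).
    move: (orth i j (ltP (ltn_ord i)) (ltP (ltn_ord j))); rewrite /inner => ->.
    case: (Nat.eqb_spec i j) => [/val_inj -> | ne]; first by rewrite eqxx.
    by case: eqP => // eij; case: ne; rewrite eij.
  have /matrixP /(_ (Ordinal (introT ltP Hr)) (Ordinal (introT ltP Hc))) := mulmx1C AAT.
  rewrite !mxE (eq_bigr (fun l : 'I_n => V l r * V l c)); last by move=> l _; rewrite !mxE.
  rewrite -(rsum_bigsum n (fun l => V l r * V l c)) => ->.
  case: (Nat.eqb_spec r c) => rc; case: eqP => // E.
  - by case: E; apply: val_inj.
  - by case: E => /= E; rewrite E in rc.
Qed.

End OrthonormalSquare.

Section Spectral.
Variables (n : nat) (A : nat -> nat -> R) (mu : nat -> R) (V : nat -> nat -> R).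
Hypothesis V_orthonormal : forall p q, (p < n)%nat -> (q < n)%nat ->
  rsum n (fun r => V p r * V q r) = if Nat.eqb p q then 1 else 0.
Hypothesis V_eigen : forall p r, (p < n)%nat -> (r < n)%nat ->
  rsum n (fun c => A r c * V p c) = mu p * V p r.

Lemma expand_in_eigenbasis y r : (r < n)%nat ->
  y r = rsum n (fun p => inner n y (V p) * V p r).
Proof.
  intros Hr. unfold inner.
  rewrite (rsum_ext n _ (fun p => rsum n (fun r' => y r' * (V p r' * V p r))))
    by (intros; rewrite <- rsum_scal_r; apply rsum_ext; intros; ring).
  rewrite rsum_swap.
  rewrite (rsum_ext n _ (fun r' => if Nat.eqb r' r then y r' else 0)).
  - now rewrite rsum_delta.
  - intros r' Hr'. rewrite rsum_scal_l, OrthonormalSquare.orthonormal_cols by auto.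
    destruct (Nat.eqb r' r); ring.
Qed.

Lemma parseval y z :
  inner n y z = rsum n (fun p => inner n y (V p) * inner n z (V p)).
Proof.
  unfold inner at 1.
  rewrite (rsum_ext n _ (fun r => rsum n (fun p => inner n z (V p) * (y r * V p r)))).
  - rewrite rsum_swap. apply rsum_ext. intros p _. rewrite rsum_scal_l. unfold inner. ring.
  - intros r Hr. rewrite (expand_in_eigenbasis z r Hr) at 1.
    rewrite <- rsum_scal_l. apply rsum_ext. intros; ring.
Qed.

Lemma quad_eigen_expansion x :
  quad n A x = rsum n (fun p => mu p * inner n x (V p) ^ 2).
Proof.
  unfold quad.
  rewrite (rsum_ext n _ (fun r => x r * rsum n (fun p => inner n x (V p) * mu p * V p r))).
  - rewrite (rsum_ext n _ (fun r => rsum n (fun p => inner n x (V p) * mu p * (x r * V p r))))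
      by (intros; rewrite <- rsum_scal_l; apply rsum_ext; intros; ring).
    rewrite rsum_swap. apply rsum_ext. intros p _. rewrite rsum_scal_l.
    fold (inner n x (V p)). ring.
  - intros r Hr. f_equal.
    rewrite (rsum_ext n _ (fun c => rsum n (fun p => inner n x (V p) * (A r c * V p c)))).
    + rewrite rsum_swap. apply rsum_ext. intros p Hp. rewrite rsum_scal_l, V_eigen by auto. ring.
    + intros c Hc. rewrite (expand_in_eigenbasis x c Hc) at 1. rewrite <- rsum_scal_l.
      apply rsum_ext. intros; ring.
Qed.

Lemma eigenvalue_times_sum_zero p : (p < n)%nat ->
  (forall c, (c < n)%nat -> rsum n (fun r => A r c) = 0) ->
  mu p * rsum n (V p) = 0.
Proof.
  intros Hp Hcol. rewrite <- rsum_scal_l.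
  rewrite (rsum_ext n _ (fun r => rsum n (fun c => A r c * V p c)))
    by (intros; rewrite V_eigen; auto).
  rewrite rsum_swap, (rsum_ext n _ (fun _ => 0)), rsum_const; [ring|].
  intros c Hc. rewrite rsum_scal_r, Hcol by auto. ring.
Qed.

End Spectral.

(* Eigenvectors with a positive eigenvalue are orthogonal to the all-ones
   vector, so a vector of zero sum has no component along [V 0]. *)
Lemma lambda2_quad_lower_bound (n : nat) (L : nat -> nat -> R) (l2 : R) (x : nat -> R) :
  is_lambda2 n L l2 -> 0 < l2 ->
  (forall c, (c < n)%nat -> rsum n (fun r => L r c) = 0) -> rsum n x = 0 ->
  l2 * sqnorm n x <= quad n L x.
Proof.
  intros [Hn [mu [V [Horth [Heig [Hmono ->]]]]]] Hpos Hcol Hx.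
  set (c p := inner n x (V p)).
  assert (ones_orth : forall p, (1 <= p < n)%nat -> rsum n (V p) = 0).
  { intros p Hp. pose proof (Hmono 1%nat p ltac:(lia) ltac:(lia)).
    pose proof (eigenvalue_times_sum_zero n L mu V Heig p ltac:(lia) Hcol) as E.
    apply Rmult_integral in E. destruct E; [lra | auto]. }
  assert (only_first : forall f, (forall p, (1 <= p < n)%nat -> f p = 0) ->
                       rsum n f = f 0%nat).
  { intros f Hf. rewrite <- (rsum_delta n 0 f) by lia. apply rsum_ext. intros p Hp.
    destruct (Nat.eqb_spec p 0) as [->|]; [reflexivity | apply Hf; lia]. }
  assert (inner_ones : forall y, inner n (fun _ => 1) y = rsum n y)
    by (intros; unfold inner; apply rsum_ext; intros; ring).
  assert (ones_first : rsum n (V 0%nat) <> 0).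
  { intros E. assert (Hones := parseval n V Horth (fun _ => 1) (fun _ => 1)).
    rewrite only_first in Hones.
    - rewrite !inner_ones, E, rsum_const in Hones.
      assert (0 < INR n) by (apply lt_0_INR; lia). lra.
    - intros p Hp. rewrite inner_ones, (ones_orth p Hp). ring. }
  assert (c0_zero : c 0%nat = 0).
  { assert (Hsum := parseval n V Horth x (fun _ => 1)).
    assert (Hx1 : inner n x (fun _ => 1) = 0)
      by (unfold inner; rewrite <- Hx; apply rsum_ext; intros; ring).
    rewrite Hx1, only_first, inner_ones in Hsum.
    - fold (c 0%nat) in Hsum. symmetry in Hsum.
      apply Rmult_integral in Hsum. tauto.
    - intros p Hp. rewrite inner_ones, (ones_orth p Hp). ring. }
  unfold sqnorm. rewrite (rsum_ext n _ (fun r => x r * x r)) by (intros; ring).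
  fold (inner n x x).
  rewrite (parseval n V Horth), (quad_eigen_expansion n L mu V Horth Heig), <- rsum_scal_l.
  apply rsum_le. intros p Hp. fold (c p).
  destruct (Nat.eqb_spec p 0) as [->|Hne].
  - rewrite c0_zero. lra.
  - pose proof (Hmono 1%nat p ltac:(lia) ltac:(lia)). pose proof (pow2_ge_0 (c p)). nra.
Qed.

(** * Laplacian quadratic forms *)

Section Laplacian.
Variables (n : nat) (A : nat -> nat -> R).
Hypothesis A_sym : forall r c, A r c = A c r.

Lemma laplacian_colsum c : (c < n)%nat -> rsum n (fun r => laplacian n A r c) = 0.
Proof.
  intros Hc. unfold laplacian. rewrite rsum_minus.
  rewrite (rsum_ext n _ (fun r => if Nat.eqb r c then rsum n (fun l => A c l) else 0)).
  - rewrite (rsum_delta n c (fun _ => rsum n (fun l => A c l))) by auto.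
    rewrite (rsum_ext n (fun r => A r c) (fun l => A c l)) by (intros; apply A_sym). ring.
  - intros r _. destruct (Nat.eqb_spec r c); subst; reflexivity.
Qed.

Lemma quad_laplacian x :
  quad n (laplacian n A) x = / 2 * rsum n (fun r => rsum n (fun c => A r c * (x r - x c) ^ 2)).
Proof.
  assert (row : forall r, (r < n)%nat ->
            x r * rsum n (fun c => laplacian n A r c * x c)
            = rsum n (fun l => A r l) * x r ^ 2 - rsum n (fun c => A r c * (x r * x c))).
  { intros r Hr. unfold laplacian.
    rewrite (rsum_ext n _ (fun c => (if Nat.eqb c r then rsum n (fun l => A r l) * x c else 0)
                                    - A r c * x c))
      by (intros c _; rewrite Nat.eqb_sym; destruct (Nat.eqb_spec c r); ring).
    rewrite rsum_minus, rsum_delta by auto.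
    rewrite (rsum_ext n (fun c => A r c * (x r * x c)) (fun c => x r * (A r c * x c)))
      by (intros; ring).
    rewrite rsum_scal_l. ring. }
  unfold quad. rewrite (rsum_ext n _ _ row), rsum_minus.
  rewrite (rsum_ext n (fun r => rsum n (fun l => A r l) * x r ^ 2)
                      (fun r => rsum n (fun c => A r c * x r ^ 2)))
    by (intros; rewrite rsum_scal_r; reflexivity).
  rewrite (rsum_ext n (fun r => rsum n (fun c => A r c * (x r - x c) ^ 2))
             (fun r => rsum n (fun c => A r c * x r ^ 2) + rsum n (fun c => A r c * x c ^ 2)
                       - 2 * rsum n (fun c => A r c * (x r * x c)))).
  - rewrite rsum_minus, rsum_plus, rsum_scal_l.
    rewrite (rsum_swap n n (fun r c => A r c * x c ^ 2)).
    rewrite (rsum_ext n (fun c => rsum n (fun r => A r c * x c ^ 2))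
                        (fun c => rsum n (fun r => A c r * x c ^ 2)))
      by (intros; apply rsum_ext; intros; rewrite A_sym; reflexivity).
    field.
  - intros r _. rewrite <- rsum_scal_l, <- rsum_plus, <- rsum_minus.
    apply rsum_ext. intros; ring.
Qed.

End Laplacian.

Lemma Mmat_sym S n m i j : Mmat S n m i j = Mmat S n m j i.
Proof.
  unfold Mmat. rewrite Nat.eqb_sym. destruct (Nat.eqb j i); [reflexivity|].
  unfold cooc. f_equal. apply rsum_ext. intros t _. now rewrite andb_comm.
Qed.

Lemma sum_pairwise_sqdiff_cooc S m n x :
  (forall t, (t < m)%nat -> NoDup (S t) /\ (forall i, In i (S t) -> (i < n)%nat)) ->
  rsum m (fun t => pairwise_sqdiff (S t) x)
  = / 2 * rsum n (fun r => rsum n (fun c => cooc S m r c * (x r - x c) ^ 2)).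
Proof.
  intros HS.
  rewrite (rsum_ext m _ (fun t => / 2 * rsum n (fun r => rsum n (fun c =>
             if (inS (S t) r && inS (S t) c)%bool then (x r - x c) ^ 2 else 0)))).
  - rewrite rsum_scal_l, rsum_swap. f_equal. apply rsum_ext. intros r _.
    rewrite rsum_swap. apply rsum_ext. intros c _. unfold cooc. rewrite <- rsum_scal_r.
    apply rsum_ext. intros t _. unfold inS.
    destruct (existsb (Nat.eqb r) (S t) && existsb (Nat.eqb c) (S t))%bool; ring.
  - intros t Ht. destruct (HS t Ht) as [Hnd Hin]. unfold pairwise_sqdiff. f_equal.
    rewrite <- (rsum_inS n (S t)) by auto. apply rsum_ext. intros r _.
    destruct (inS (S t) r); simpl.
    + rewrite <- (rsum_inS n (S t)) by auto. reflexivity.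
    + rewrite rsum_const. ring.
Qed.

Lemma quad_laplacian_Mmat S n m x :
  (forall t, (t < m)%nat -> NoDup (S t) /\ (forall i, In i (S t) -> (i < n)%nat)) ->
  quad n (laplacian n (Mmat S n m)) x = INR n / INR m * rsum m (fun t => pairwise_sqdiff (S t) x).
Proof.
  intros HS.
  rewrite quad_laplacian, (sum_pairwise_sqdiff_cooc S m n x HS) by apply Mmat_sym.
  enough (E : rsum n (fun r => rsum n (fun c => Mmat S n m r c * (x r - x c) ^ 2))
              = INR n / INR m * rsum n (fun r => rsum n (fun c => cooc S m r c * (x r - x c) ^ 2)))
    by (rewrite E; ring).
  rewrite <- rsum_scal_l. apply rsum_ext. intros r _.
  rewrite <- rsum_scal_l. apply rsum_ext. intros c _.
  unfold Mmat. destruct (Nat.eqb_spec r c) as [<-|]; ring.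
Qed.

(** * The Luce model on the outcome space *)

Lemma lsum_exp_pos th l : l <> [] -> 0 < lsum l (fun v => exp (th v)).
Proof. intros H. apply sum_over_pos; auto. intros; apply exp_pos. Qed.

Lemma luce_p_nonneg th i l : 0 <= luce_p th i l.
Proof.
  unfold luce_p. destruct l as [|a l].
  - unfold lsum, Rdiv. simpl. rewrite Rinv_0, Rmult_0_r. lra.
  - left. apply Rdiv_lt_0_compat; [apply exp_pos | apply lsum_exp_pos; congruence].
Qed.

Lemma luce_p_sum th l : l <> [] -> sum_over l (fun i => luce_p th i l) = 1.
Proof.
  intros H. unfold luce_p, Rdiv. rewrite sum_over_scal_r, <- lsum_sum_over.
  pose proof (lsum_exp_pos th l H). field. lra.
Qed.

Lemma rprod_S m f : rprod (S m) f = rprod m f * f m.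
Proof.
  unfold rprod. rewrite seq_S, map_app, fold_right_app. simpl.
  generalize (f m). induction (map f (seq 0 m)) as [|a l IH]; intros; simpl; [ring|].
  rewrite IH. ring.
Qed.

Lemma rprod_ext m f g : (forall t, (t < m)%nat -> f t = g t) -> rprod m f = rprod m g.
Proof.
  induction m as [|m IH]; intros H; [reflexivity|].
  rewrite !rprod_S, IH, H by (lia || (intros; apply H; lia)). reflexivity.
Qed.

Lemma rprod_nonneg m f : (forall t, (t < m)%nat -> 0 <= f t) -> 0 <= rprod m f.
Proof.
  induction m as [|m IH]; intros H; [unfold rprod; simpl; lra|].
  rewrite rprod_S. apply Rmult_le_pos; auto.
Qed.

Lemma outcomes_length S m ys : In ys (outcomes S m) -> length ys = m.
Proof.
  revert ys. induction m as [|m IH]; simpl; intros ys H.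
  - destruct H as [<-|[]]. reflexivity.
  - apply in_flat_map in H. destruct H as [zs [Hz Hy]]. apply in_map_iff in Hy.
    destruct Hy as [i [<- _]]. rewrite length_app, (IH zs Hz). simpl. lia.
Qed.

Lemma obs_app_lt ys i t : (t < length ys)%nat -> obs (ys ++ [i]) t = obs ys t.
Proof. intros H. unfold obs. now rewrite app_nth1. Qed.

Lemma obs_app_last ys i : obs (ys ++ [i]) (length ys) = i.
Proof. unfold obs. now rewrite app_nth2, Nat.sub_diag by lia. Qed.

Lemma outcomes_obs_in S m ys t : In ys (outcomes S m) -> (t < m)%nat -> In (obs ys t) (S t).
Proof.
  revert ys. induction m as [|m IH]; simpl; intros ys H Ht; [lia|].
  apply in_flat_map in H. destruct H as [zs [Hz Hy]]. apply in_map_iff in Hy.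
  destruct Hy as [i [<- Hi]]. pose proof (outcomes_length S m zs Hz) as Hl.
  destruct (Nat.eq_dec t m) as [->|Hne].
  - rewrite <- Hl, obs_app_last. now rewrite Hl.
  - rewrite obs_app_lt by lia. apply IH; auto. lia.
Qed.

Lemma outcome_prob_nonneg S m th ys : 0 <= outcome_prob S m th ys.
Proof. apply rprod_nonneg. intros; apply luce_p_nonneg. Qed.

Lemma outcome_prob_app S m th ys i : length ys = m ->
  outcome_prob S (Datatypes.S m) th (ys ++ [i]) = outcome_prob S m th ys * luce_p th i (S m).
Proof.
  intros Hl. unfold outcome_prob. rewrite rprod_S. f_equal.
  - apply rprod_ext. intros t Ht. rewrite obs_app_lt by lia. reflexivity.
  - now rewrite <- Hl, obs_app_last.
Qed.

Definition expect (S : nat -> list nat) (m : nat) (th : nat -> R) (F : list nat -> R) : R :=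
  sum_over (outcomes S m) (fun ys => outcome_prob S m th ys * F ys).

Lemma Prob_expect S m th E : Prob S m th E = expect S m th (fun ys => Defs.ind (E ys)).
Proof. reflexivity. Qed.

Lemma expect_S S m th F :
  expect S (Datatypes.S m) th F
  = expect S m th (fun ys => sum_over (S m) (fun i => luce_p th i (S m) * F (ys ++ [i]))).
Proof.
  unfold expect. simpl outcomes. rewrite sum_over_flat_map. apply sum_over_ext. intros ys Hys.
  rewrite sum_over_map, <- sum_over_scal_l. apply sum_over_ext. intros i _.
  rewrite outcome_prob_app by (eapply outcomes_length; eauto). ring.
Qed.

Lemma expect_le S m th F G :
  (forall ys, In ys (outcomes S m) -> F ys <= G ys) -> expect S m th F <= expect S m th G.
Proof.
  intros H. apply sum_over_le. intros ys Hys.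
  apply Rmult_le_compat_l; [apply outcome_prob_nonneg | auto].
Qed.

Lemma expect_affine S m th a c F :
  expect S m th (fun ys => a - c * F ys) = a * expect S m th (fun _ => 1) - c * expect S m th F.
Proof.
  unfold expect. rewrite <- !sum_over_scal_l, <- sum_over_minus.
  apply sum_over_ext. intros; ring.
Qed.

Lemma expect_scal S m th c F : expect S m th (fun ys => c * F ys) = c * expect S m th F.
Proof. unfold expect. rewrite <- sum_over_scal_l. apply sum_over_ext. intros; ring. Qed.

Lemma expect_one S m th : (forall t, (t < m)%nat -> S t <> []) -> expect S m th (fun _ => 1) = 1.
Proof.
  induction m as [|m IH]; intros H.
  - unfold expect, outcome_prob, rprod, sum_over. simpl. ring.
  - rewrite expect_S. transitivity (expect S m th (fun _ => 1)); [|apply IH; intros; apply H; lia].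
    apply sum_over_ext. intros ys _. f_equal.
    rewrite (sum_over_ext _ _ (fun i => luce_p th i (S m))) by (intros; ring).
    apply luce_p_sum, H. lia.
Qed.

(** * Exponential moments of the score *)

(* The gradient at [th] of [ln (luce_p _ y l)]. *)
Definition luce_score (th : nat -> R) (l : list nat) (y i : nat) : R :=
  (if Nat.eqb i y then 1 else 0) - (if inS l i then luce_p th i l else 0).

Definition loglik_score (S : nat -> list nat) (m : nat) (th : nat -> R)
  (ys : list nat) (i : nat) : R :=
  rsum m (fun t => luce_score th (S t) (obs ys t) i).

Lemma exists_max_on_list (l : list nat) (a : nat -> R) : l <> [] ->
  exists i, In i l /\ forall y, In y l -> a y <= a i.
Proof.
  induction l as [|x l IH]; intros H; [congruence|].
  destruct l as [|z l'].
  - exists x. split; [left; auto|]. intros y [<-|[]]. lra.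
  - destruct IH as [i [Hi Hmax]]; [congruence|].
    destruct (Rle_dec (a x) (a i)).
    + exists i. split; [right; auto|]. intros y [<-|Hy]; auto.
    + exists x. split; [left; auto|]. intros y [<-|Hy]; [lra|]. specialize (Hmax y Hy). lra.
Qed.

Lemma sqdiff_le_sqnorm n (a : nat -> R) i j : (i < n)%nat -> (j < n)%nat ->
  (a i - a j) ^ 2 <= 2 * sqnorm n a.
Proof.
  intros Hi Hj. pose proof (sqnorm_nonneg n a). destruct (Nat.eq_dec i j) as [->|Hne].
  - replace (a j - a j) with 0 by ring. lra.
  - assert (a i ^ 2 + a j ^ 2 <= sqnorm n a).
    { unfold sqnorm. rewrite <- (rsum_delta n i (fun l => a l ^ 2)), <- (rsum_delta n j (fun l => a l ^ 2)),
        <- rsum_plus by auto.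
      apply rsum_le. intros z _. pose proof (pow2_ge_0 (a z)).
      destruct (Nat.eqb_spec z i), (Nat.eqb_spec z j); subst; try lia; lra. }
    pose proof (pow2_ge_0 (a i + a j)). nra.
Qed.

Section ScoreStep.
Variables (n : nat) (th : nat -> R) (l : list nat).
Hypotheses (l_nodup : NoDup l) (l_nonempty : l <> []) (l_range : forall i, In i l -> (i < n)%nat).

Let p y := luce_p th y l.
Let p_nonneg y : 0 <= p y.
Proof. apply luce_p_nonneg. Qed.
Let p_sum : sum_over l p = 1.
Proof. exact (luce_p_sum th l l_nonempty). Qed.

Lemma sqnorm_add_score (a : nat -> R) y : In y l ->
  sqnorm n (fun i => a i + luce_score th l y i)
  <= sqnorm n a + 2 * (a y - sum_over l (fun v => p v * a v)) + 2.
Proof.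
  intros Hy.
  assert (p_le_1 : forall v, In v l -> p v <= 1).
  { intros v Hv. rewrite <- p_sum. apply sum_over_elem_le; auto. }
  assert (sum_sq_le_1 : sum_over l (fun v => p v ^ 2) <= 1).
  { rewrite <- p_sum. apply sum_over_le. intros v Hv.
    specialize (p_le_1 v Hv). specialize (p_nonneg v). nra. }
  unfold sqnorm.
  rewrite (rsum_ext n _ (fun i => a i ^ 2
             + 2 * ((if Nat.eqb i y then a i else 0) - (if inS l i then p i * a i else 0))
             + ((if Nat.eqb i y then 1 - 2 * p i else 0) + (if inS l i then p i ^ 2 else 0)))).
  - rewrite !rsum_plus, rsum_scal_l, rsum_minus, !rsum_delta, !rsum_inS by auto.
    specialize (p_nonneg y). lra.
  - intros i Hi. unfold luce_score. fold (p i).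
    destruct (Nat.eqb_spec i y) as [->|Hiy].
    + replace (inS l y) with true by (symmetry; now apply inS_spec). ring.
    + destruct (inS l i); ring.
Qed.

(* One observation multiplies the exponential moment by at most
   [exp (2 al)] and inflates the rate from [al] to [al + al^2]: the linear
   term [a y - E a] is handled by Hoeffding's lemma, whose range satisfies
   [(max a - min a)^2 <= 2 |a|^2]. *)
Lemma mgf_score_step (a : nat -> R) (al : R) : 0 <= al ->
  sum_over l (fun y => p y * exp (al * sqnorm n (fun i => a i + luce_score th l y i)))
  <= exp (2 * al) * exp ((al + al ^ 2) * sqnorm n a).
Proof.
  intros Hal.
  set (abar := sum_over l (fun v => p v * a v)).
  destruct (exists_max_on_list l a l_nonempty) as [imax [Himax Hmax]].
  destruct (exists_max_on_list l (fun v => - a v) l_nonempty) as [imin [Himin Hmin]].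
  assert (hoeff : sum_over l (fun y => p y * exp (2 * al * (a y - abar)))
                  <= exp (al ^ 2 * sqnorm n a)).
  { eapply Rle_trans.
    - apply (hoeffding_lemma l p (fun y => a y - abar) (a imin - abar) (a imax - abar));
        [intros; apply p_nonneg | exact p_sum | | | lra].
      + rewrite (sum_over_ext _ _ (fun y => p y * a y - abar * p y)) by (intros; ring).
        rewrite sum_over_minus, sum_over_scal_l, p_sum. unfold abar. ring.
      + intros y Hy. specialize (Hmin y Hy). specialize (Hmax y Hy). lra.
    - apply exp_le_compat.
      pose proof (sqdiff_le_sqnorm n a imax imin (l_range _ Himax) (l_range _ Himin)).
      pose proof (pow2_ge_0 al).
      replace ((2 * al) ^ 2 * (a imax - abar - (a imin - abar)) ^ 2 / 8)
        with (al ^ 2 * ((a imax - a imin) ^ 2 / 2)) by field.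
      apply Rmult_le_compat_l; lra. }
  apply Rle_trans with
    (sum_over l (fun y => exp (al * sqnorm n a + 2 * al) * (p y * exp (2 * al * (a y - abar))))).
  - apply sum_over_le. intros y Hy.
    replace (exp (al * sqnorm n a + 2 * al) * (p y * exp (2 * al * (a y - abar))))
      with (p y * exp (al * sqnorm n a + 2 * al + 2 * al * (a y - abar))) by (rewrite exp_plus; ring).
    apply Rmult_le_compat_l; [apply p_nonneg|]. apply exp_le_compat.
    pose proof (sqnorm_add_score a y Hy). fold abar in H. nra.
  - rewrite sum_over_scal_l.
    apply Rle_trans with (exp (al * sqnorm n a + 2 * al) * exp (al ^ 2 * sqnorm n a)).
    + apply Rmult_le_compat_l; [left; apply exp_pos | auto].
    + rewrite <- !exp_plus. apply exp_le_compat. lra.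
Qed.

End ScoreStep.

(* The rate after iterating [mgf_score_step] once per observation. *)
Fixpoint mgf_rate (m : nat) (al : R) : R :=
  match m with
  | O => 0
  | Datatypes.S m' => al + mgf_rate m' (al + al ^ 2)
  end.

Lemma loglik_score_app S th m ys i j : length ys = m ->
  loglik_score S (Datatypes.S m) th (ys ++ [i]) j = loglik_score S m th ys j + luce_score th (S m) i j.
Proof.
  intros Hl. unfold loglik_score. rewrite rsum_S. f_equal.
  - apply rsum_ext. intros t Ht. rewrite obs_app_lt by lia. reflexivity.
  - now rewrite <- Hl, obs_app_last.
Qed.

Lemma mgf_loglik_score n S th m al :
  (forall t, (t < m)%nat -> NoDup (S t) /\ S t <> [] /\ (forall i, In i (S t) -> (i < n)%nat)) ->
  0 <= al ->
  expect S m th (fun ys => exp (al * sqnorm n (loglik_score S m th ys))) <= exp (2 * mgf_rate m al).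
Proof.
  revert al. induction m as [|m IH]; intros al HS Hal.
  - unfold expect, outcome_prob, rprod, sum_over. simpl.
    unfold sqnorm, loglik_score, rsum at 2. simpl.
    rewrite (rsum_ext n _ (fun _ => 0)), rsum_const by (intros; simpl; ring).
    rewrite !Rmult_0_r, exp_0. lra.
  - rewrite expect_S. cbn [mgf_rate].
    destruct (HS m ltac:(lia)) as [Hnd [Hne Hin]].
    apply Rle_trans with
      (expect S m th (fun ys => exp (2 * al) * exp ((al + al ^ 2) * sqnorm n (loglik_score S m th ys)))).
    + apply expect_le. intros ys Hys.
      eapply Rle_trans; [|apply (mgf_score_step n th (S m)); auto].
      right. apply sum_over_ext. intros y _. do 3 f_equal.
      apply rsum_ext. intros j _. rewrite loglik_score_app by (eapply outcomes_length; eauto). reflexivity.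
    + rewrite expect_scal, Rmult_plus_distr_l, exp_plus.
      apply Rmult_le_compat_l; [left; apply exp_pos|].
      apply IH; [intros; apply HS; lia|]. pose proof (pow2_ge_0 al). lra.
Qed.

(* [al <= 1/c] implies [al + al^2 <= 1/(c - 1)]. *)
Lemma mgf_rate_le m : forall c al, 0 <= al <= / c -> INR m + 1 <= c ->
  mgf_rate m al <= INR m / (c - INR m).
Proof.
  induction m as [|m IH]; intros c al Hal Hc.
  - simpl. unfold Rdiv. lra.
  - cbn [mgf_rate]. rewrite S_INR in *. pose proof (pos_INR m).
    assert (Hc0 : 1 < c) by lra.
    assert (next : 0 <= al + al ^ 2 <= / (c - 1)).
    { split; [pose proof (pow2_ge_0 al); lra|].
      assert (al ^ 2 <= / c ^ 2) by (rewrite <- pow_inv; apply pow_incr; lra).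
      apply Rle_trans with (/ c + / c ^ 2); [lra|].
      apply Rmult_le_reg_r with (c ^ 2 * (c - 1)); [apply Rmult_lt_0_compat; [apply pow_lt|]; lra|].
      field_simplify; nra. }
    specialize (IH (c - 1) (al + al ^ 2) next ltac:(lra)).
    assert (al <= / (c - 1 - INR m)).
    { apply Rle_trans with (/ c); [lra|]. apply Rinv_le_contravar; lra. }
    replace ((INR m + 1) / (c - (INR m + 1))) with (/ (c - 1 - INR m) + INR m / (c - 1 - INR m))
      by (field; lra).
    lra.
Qed.

(** * Strong concavity of the log-likelihood *)

Lemma ln_luce_p th y l : l <> [] ->
  ln (luce_p th y l) = th y - ln (lsum l (fun v => exp (th v))).
Proof.
  intros H. unfold luce_p. rewrite ln_div, ln_exp; auto using exp_pos, lsum_exp_pos.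
Qed.

Lemma ln_luce_p_gap (l : list nat) (ts th : nat -> R) (b : R) y : l <> [] ->
  (forall v, In v l -> - b <= ts v <= b /\ - b <= th v <= b) ->
  ln (luce_p th y l) - ln (luce_p ts y l)
  <= (th y - ts y) - sum_over l (fun v => luce_p ts v l * (th v - ts v))
     - exp (- (4 * b)) / INR (length l) ^ 2 * pairwise_sqdiff l (fun v => th v - ts v) / 2.
Proof.
  intros Hne Hbox.
  assert (H := log_sum_exp_strong_convexity l ts (fun v => th v - ts v) b Hne).
  cbv beta in H.
  replace (lsum l (fun v => exp (ts v + (th v - ts v)))) with (lsum l (fun v => exp (th v)))
    in H by (apply sum_over_ext; intros; f_equal; ring).
  assert (E : sum_over l (fun v => luce_p ts v l * (th v - ts v))
              = sum_over l (fun v => exp (ts v) * (th v - ts v)) / lsum l (fun v => exp (ts v))).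
  { unfold Rdiv. rewrite <- sum_over_scal_r. apply sum_over_ext. intros v _.
    unfold luce_p, Rdiv. ring. }
  rewrite !ln_luce_p, E by auto.
  enough (ln (lsum l (fun v => exp (ts v)))
          + sum_over l (fun v => exp (ts v) * (th v - ts v)) / lsum l (fun v => exp (ts v))
          + exp (- (4 * b)) / INR (length l) ^ 2 * pairwise_sqdiff l (fun v => th v - ts v) / 2
          <= ln (lsum l (fun v => exp (th v)))) by lra.
  apply H. intros v Hv. destruct (Hbox v Hv). split; [lra|].
  now replace (ts v + (th v - ts v)) with (th v) by ring.
Qed.

Lemma inner_loglik_score S m th ys n (D : nat -> R) :
  (forall t, (t < m)%nat -> NoDup (S t) /\ (forall i, In i (S t) -> (i < n)%nat)) ->
  In ys (outcomes S m) ->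
  rsum m (fun t => D (obs ys t) - sum_over (S t) (fun v => luce_p th v (S t) * D v))
  = inner n (loglik_score S m th ys) D.
Proof.
  intros HS Hys. unfold inner, loglik_score.
  rewrite (rsum_ext n _ (fun i => rsum m (fun t => luce_score th (S t) (obs ys t) i * D i)))
    by (intros; symmetry; apply rsum_scal_r).
  rewrite rsum_swap. apply rsum_ext. intros t Ht.
  destruct (HS t Ht) as [Hnd Hin].
  pose proof (outcomes_obs_in S m ys t Hys Ht).
  unfold luce_score.
  rewrite (rsum_ext n _ (fun i => (if Nat.eqb i (obs ys t) then D i else 0)
                                  - (if inS (S t) i then luce_p th i (S t) * D i else 0)))
    by (intros; destruct (Nat.eqb i (obs ys t)), (inS (S t) i); ring).
  rewrite rsum_minus, rsum_delta, rsum_inS; auto.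
Qed.

Lemma sqnorm_le_of_linear_growth n (G D : nat -> R) (A : R) : 0 < A ->
  A * sqnorm n D <= inner n G D -> A ^ 2 * sqnorm n D <= sqnorm n G.
Proof.
  intros HA Hgrow.
  assert (square : 0 <= sqnorm n G - 2 * A * inner n G D + A ^ 2 * sqnorm n D).
  { replace (sqnorm n G - 2 * A * inner n G D + A ^ 2 * sqnorm n D)
      with (sqnorm n (fun i => G i - A * D i)) by
      (unfold sqnorm, inner; rewrite <- !rsum_scal_l, <- rsum_minus, <- rsum_plus;
       apply rsum_ext; intros; ring).
    apply sqnorm_nonneg. }
  pose proof (sqnorm_nonneg n D). nra.
Qed.

Section MaximumLikelihood.
Variables (n m k : nat) (b : R) (S : nat -> list nat) (l2 : R).
Hypotheses (k_pos : (0 < k)%nat) (m_pos : (0 < m)%nat).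
Hypothesis S_ok : forall t, (t < m)%nat ->
  NoDup (S t) /\ length (S t) = k /\ (forall i, In i (S t) -> (i < n)%nat).
Hypotheses (Hl2 : is_lambda2 n (laplacian n (Mmat S n m)) l2) (l2_pos : 0 < l2).

Let S_nonempty t : (t < m)%nat -> S t <> [].
Proof. intros Ht E. destruct (S_ok t Ht) as [_ [Hlen _]]. rewrite E in Hlen. simpl in Hlen. lia. Qed.

Let gam := exp (- (4 * b)) / INR k ^ 2.

Lemma loglik_gap_bound ts th ys : in_Theta n b ts -> in_Theta n b th ->
  In ys (outcomes S m) ->
  loglik S m ys th - loglik S m ys ts
  <= inner n (loglik_score S m ts ys) (fun v => th v - ts v)
     - gam / 2 * rsum m (fun t => pairwise_sqdiff (S t) (fun v => th v - ts v)).
Proof.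
  intros [Bts _] [Bth _] Hys.
  rewrite <- inner_loglik_score with (S := S) (m := m)
    by (auto; intros t Ht; destruct (S_ok t Ht) as [? [? ?]]; auto).
  rewrite <- rsum_scal_l, <- rsum_minus. unfold loglik. rewrite <- rsum_minus.
  apply rsum_le. intros t Ht. destruct (S_ok t Ht) as [Hnd [Hlen Hin]].
  eapply Rle_trans.
  - apply ln_luce_p_gap with (b := b); [now apply S_nonempty|].
    intros v Hv. specialize (Hin v Hv). split; auto.
  - rewrite Hlen. unfold gam. right. field. apply not_0_INR. lia.
Qed.

Let n_pos : 0 < INR n.
Proof. destruct Hl2. apply lt_0_INR. lia. Qed.

Let gam_pos : 0 < gam.
Proof. apply Rdiv_lt_0_compat; [apply exp_pos | apply pow_lt, lt_0_INR; lia]. Qed.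

Lemma mle_linear_growth ts th ys : in_Theta n b ts -> in_Theta n b th ->
  In ys (outcomes S m) -> loglik S m ys ts <= loglik S m ys th ->
  gam * INR m * l2 / (2 * INR n) * sqnorm n (fun v => th v - ts v)
  <= inner n (loglik_score S m ts ys) (fun v => th v - ts v).
Proof.
  intros Hts Hth Hys Hll.
  assert (HmR : 0 < INR m) by (apply lt_0_INR; lia).
  set (D := fun v => th v - ts v).
  assert (spectral : l2 * sqnorm n D <= quad n (laplacian n (Mmat S n m)) D).
  { apply lambda2_quad_lower_bound; auto.
    - intros c Hc. apply laplacian_colsum; auto using Mmat_sym.
    - destruct Hts as [_ Sts], Hth as [_ Sth].
      unfold D. rewrite rsum_minus, Sth, Sts. ring. }
  rewrite quad_laplacian_Mmat in spectral
    by (intros t Ht; destruct (S_ok t Ht) as [? [? ?]]; auto).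
  pose proof (loglik_gap_bound ts th ys Hts Hth Hys) as gap. fold D in gap.
  apply Rmult_le_compat_l with (r := gam / 2 * (INR m / INR n)) in spectral;
    [|apply Rmult_le_pos; apply Rdiv_le_0_compat; pose proof n_pos; lra].
  replace (gam / 2 * (INR m / INR n) * (INR n / INR m * rsum m (fun t => pairwise_sqdiff (S t) D)))
    with (gam / 2 * rsum m (fun t => pairwise_sqdiff (S t) D)) in spectral
    by (pose proof n_pos; field; lra).
  replace (gam * INR m * l2 / (2 * INR n) * sqnorm n D)
    with (gam / 2 * (INR m / INR n) * (l2 * sqnorm n D)) by (pose proof n_pos; field; lra).
  lra.
Qed.

Lemma mle_sqnorm_bound ts th ys : in_Theta n b ts -> in_Theta n b th ->
  In ys (outcomes S m) -> loglik S m ys ts <= loglik S m ys th ->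
  MSE n th ts <= (4 * INR k ^ 2 * exp (4 * b)) ^ 2 * INR n
                 * sqnorm n (loglik_score S m ts ys) / (4 * INR m ^ 2 * l2 ^ 2).
Proof.
  intros Hts Hth Hys Hll.
  pose proof n_pos. pose proof gam_pos.
  assert (HmR : 0 < INR m) by (apply lt_0_INR; lia).
  set (A := gam * INR m * l2 / (2 * INR n)).
  assert (HA : 0 < A)
    by (unfold A; apply Rdiv_lt_0_compat; [apply Rmult_lt_0_compat; [apply Rmult_lt_0_compat|]|]; lra).
  pose proof (mle_linear_growth ts th ys Hts Hth Hys Hll) as growth. fold A in growth.
  apply sqnorm_le_of_linear_growth in growth; auto.
  unfold MSE. change (rsum n (fun i => (th i - ts i) ^ 2)) with (sqnorm n (fun v => th v - ts v)).
  replace ((4 * INR k ^ 2 * exp (4 * b)) ^ 2 * INR n * sqnorm n (loglik_score S m ts ys)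
           / (4 * INR m ^ 2 * l2 ^ 2))
    with (/ INR n * (sqnorm n (loglik_score S m ts ys) / A ^ 2)).
  - apply Rmult_le_compat_l; [left; apply Rinv_0_lt_compat; auto|].
    apply Rmult_le_reg_r with (A ^ 2); [apply pow_lt; auto|].
    replace (sqnorm n (loglik_score S m ts ys) / A ^ 2 * A ^ 2)
      with (sqnorm n (loglik_score S m ts ys)) by (field; lra).
    lra.
  - assert (HkR : 0 < INR k) by (apply lt_0_INR; lia).
    assert (E4 : exp (- (4 * b)) * exp (4 * b) = 1)
      by (rewrite <- exp_plus, Rplus_opp_l; apply exp_0).
    pose proof (exp_pos (4 * b)).
    unfold A, gam. replace (exp (- (4 * b))) with (/ exp (4 * b)) by (field_simplify_eq; lra).
    field. repeat split; lra.
Qed.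

End MaximumLikelihood.

(** * The high-probability bound *)

Lemma is_lambda2_zero n (A : nat -> nat -> R) l2 :
  (forall r c, A r c = 0) -> is_lambda2 n A l2 -> l2 = 0.
Proof.
  intros A0 [Hn [mu [V [Horth [Heig [_ ->]]]]]].
  assert (Hmu : forall r, (r < n)%nat -> mu 1%nat * V 1%nat r = 0).
  { intros r Hr. rewrite <- Heig by lia.
    rewrite (rsum_ext n _ (fun _ => 0)), rsum_const by (intros; rewrite A0; ring). ring. }
  specialize (Horth 1%nat 1%nat ltac:(lia) ltac:(lia)). simpl in Horth.
  rewrite <- (Rmult_1_r (mu 1%nat)), <- Horth, <- rsum_scal_l.
  rewrite (rsum_ext n _ (fun _ => 0)), rsum_const; [ring|].
  intros r Hr. rewrite <- Rmult_assoc, Hmu by auto. ring.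
Qed.

Lemma laplacian_Mmat_no_obs S n r c : laplacian n (Mmat S n 0) r c = 0.
Proof.
  assert (M0 : forall r c, Mmat S n 0 r c = 0)
    by (intros; unfold Mmat, cooc, rsum, sum_over; simpl; destruct (Nat.eqb _ _); ring).
  unfold laplacian. rewrite (rsum_ext n _ (fun _ => 0)), rsum_const, M0 by (intros; apply M0).
  destruct (Nat.eqb r c); ring.
Qed.

(* Chernoff's bound, from [1 - exp (al (g - T)) <= 1{E}] pointwise. *)
Lemma Prob_ge_exp_moment S m th (E : list nat -> Prop) (g : list nat -> R) (al T : R) :
  0 < al -> (forall t, (t < m)%nat -> S t <> []) ->
  (forall ys, In ys (outcomes S m) -> g ys <= T -> E ys) ->
  Prob S m th E >= 1 - exp (- (al * T)) * expect S m th (fun ys => exp (al * g ys)).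
Proof.
  intros Hal HS HE. apply Rle_ge.
  rewrite Prob_expect.
  replace (1 - exp (- (al * T)) * expect S m th (fun ys => exp (al * g ys)))
    with (expect S m th (fun ys => 1 - exp (- (al * T)) * exp (al * g ys)))
    by (rewrite expect_affine, expect_one by auto; ring).
  apply expect_le. intros ys Hys. rewrite <- exp_plus. unfold Defs.ind.
  destruct (excluded_middle_informative (E ys)) as [_|notE].
  - pose proof (exp_pos (- (al * T) + al * g ys)). lra.
  - destruct (Rle_dec (g ys) T) as [HgT|HgT]; [now exfalso; apply notE, HE|].
    enough (1 < exp (- (al * T) + al * g ys)) by lra.
    rewrite <- exp_0. apply exp_increasing. nra.
Qed.

Lemma exp_moment_loglik_score n S th m :
  (0 < m)%nat ->
  (forall t, (t < m)%nat -> NoDup (S t) /\ S t <> [] /\ (forall i, In i (S t) -> (i < n)%nat)) ->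
  expect S m th (fun ys => exp (/ (4 * INR m) * sqnorm n (loglik_score S m th ys)))
  <= exp (2 / 3).
Proof.
  intros Hm HS. assert (HmR : 1 <= INR m) by (apply (le_INR 1); lia).
  eapply Rle_trans; [apply mgf_loglik_score; auto; left; apply Rinv_0_lt_compat; lra|].
  apply exp_le_compat.
  enough (mgf_rate m (/ (4 * INR m)) <= INR m / (4 * INR m - INR m)).
  { replace (INR m / (4 * INR m - INR m)) with (1 / 3) in H by (field; lra). lra. }
  apply mgf_rate_le; [|lra]. split; [left; apply Rinv_0_lt_compat|]; lra.
Qed.

Lemma exp_neg_ln_bound (x : R) : 0 < x -> exp (- (ln x + 2)) * exp (2 / 3) <= 2 / x.
Proof.
  intros Hx. rewrite <- exp_plus.
  replace (- (ln x + 2) + 2 / 3) with (- ln x + - (4 / 3)) by field.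
  rewrite exp_plus, exp_Ropp, exp_ln by auto.
  assert (exp (- (4 / 3)) <= 1) by (rewrite <- exp_0; apply exp_le_compat; lra).
  pose proof (Rinv_0_lt_compat x Hx). unfold Rdiv. nra.
Qed.

Theorem theorem2
  (n m k : nat) (b : R) (theta_star : nat -> R) (S : nat -> list nat)
  (thetahat : list nat -> nat -> R) (l2 : R) :
  in_Theta n b theta_star ->
  (2 <= k)%nat ->
  (forall t, (t < m)%nat ->
     NoDup (S t) /\ length (S t) = k /\ (forall i, In i (S t) -> (i < n)%nat)) ->
  is_lambda2 n (laplacian n (Mmat S n m)) l2 ->
  0 < l2 ->
  (forall ys, In ys (outcomes S m) ->
     in_Theta n b (thetahat ys) /\
     (forall theta, in_Theta n b theta ->
        loglik S m ys theta <= loglik S m ys (thetahat ys))) ->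
  Prob S m theta_star
    (fun ys =>
       MSE n (thetahat ys) theta_star <=
       (4 * INR k ^ 2 * exp (4 * b)) ^ 2
         * (INR n * (ln (INR n) + 2) / l2 ^ 2) * / INR m)
  >= 1 - 2 / INR n.
Proof.
  intros Hts Hk HS Hl2 Hpos Hmax.
  assert (HnR : 0 < INR n) by (destruct Hl2; apply lt_0_INR; lia).
  assert (Hm : (0 < m)%nat).
  { destruct m; [|lia]. apply is_lambda2_zero in Hl2; [lra|]. apply laplacian_Mmat_no_obs. }
  assert (HmR : 0 < INR m) by (apply lt_0_INR; lia).
  assert (HS' : forall t, (t < m)%nat ->
                  NoDup (S t) /\ S t <> [] /\ (forall i, In i (S t) -> (i < n)%nat)).
  { intros t Ht. destruct (HS t Ht) as [? [Hlen ?]]. repeat split; auto.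
    intros E. rewrite E in Hlen. simpl in Hlen. lia. }
  eapply Rge_trans, Rle_ge.
  - apply (Prob_ge_exp_moment S m theta_star _ (fun ys => sqnorm n (loglik_score S m theta_star ys))
             (/ (4 * INR m)) (4 * INR m * (ln (INR n) + 2)));
      [apply Rinv_0_lt_compat; lra | intros t Ht; apply HS'; auto |].
    intros ys Hys Hscore. destruct (Hmax ys Hys) as [Hth Hopt].
    eapply Rle_trans;
      [apply (mle_sqnorm_bound n m k b S l2 ltac:(lia) Hm HS Hl2 Hpos _ _ ys); auto|].
    replace ((4 * INR k ^ 2 * exp (4 * b)) ^ 2 * (INR n * (ln (INR n) + 2) / l2 ^ 2) * / INR m)
      with ((4 * INR k ^ 2 * exp (4 * b)) ^ 2 * INR n * (4 * INR m * (ln (INR n) + 2))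
            / (4 * INR m ^ 2 * l2 ^ 2)) by (field; lra).
    unfold Rdiv. apply Rmult_le_compat_r; [left; apply Rinv_0_lt_compat; pose proof (pow_lt _ 2 HmR); pose proof (pow_lt _ 2 Hpos); nra|].
    apply Rmult_le_compat_l; [apply Rmult_le_pos; [apply pow2_ge_0 | lra] | auto].
  - replace (/ (4 * INR m) * (4 * INR m * (ln (INR n) + 2))) with (ln (INR n) + 2) by (field; lra).
    pose proof (exp_moment_loglik_score n S theta_star m Hm HS').
    pose proof (exp_neg_ln_bound (INR n) HnR). pose proof (exp_pos (- (ln (INR n) + 2))).
    nra.
Qed.
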